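(* Let $n\geq 6$ be an integer, $K$ a field, $R=K[x_1,\dots,x_n]$, and let $I_n$ be the ideal of $R$ generated by the monomials $x_1x_3,\dots,x_1x_{n-1}$; $x_2x_4,\dots,x_2x_n$; $x_3x_5,\dots,x_3x_n$; $x_4x_n,\dots,x_{n-2}x_n$. Let $B=(b_{ij})_{i,j=1,\dots,n-3}$ be the matrix defined by: $b_{jj}=x_1$ for $j=1,\dots,n-4$ and $b_{n-3,n-3}=x_3$; $b_{j+1,j}=x_2$ for $j=1,\dots,n-4$; $b_{ij}=0$ if $i\geq j+2$; $b_{j-1,j}=x_3x_{3+j}$ for $j=2,\dots,n-4$; $b_{1,n-3}=x_2$ and $b_{i,n-3}=x_{2+i}$ for $i=2,\dots,n-4$; $b_{ij}=0$ if $j\geq i+2$ and $j\neq n-3$. Let $D=\det B-(-1)^n x_2^{n-3}$. Then: (a) $D\in I_n$; (b) $D-x_1^{n-4}x_3\in x_2\,(x_4,\dots,x_n)$, where $(x_4,\dots,x_n)$ is the ideal of $R$ generated by $x_4,\dots,x_n$. *)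

From HB Require Import structures.
From mathcomp Require Import all_boot all_order all_algebra.
From mathcomp Require Import mpoly.
Set Implicit Arguments. Unset Strict Implicit. Unset Printing Implicit Defensive.
Import GRing.Theory.
Local Open Scope ring_scope.

(* Polynomial ring R = K[x_1,...,x_n] is {mpoly K[n]}; the variable x_k
   (1-indexed, 1 <= k <= n) is 'X_(k-1). Out-of-range k gives 0 (never used). *)
Definition xv (K : fieldType) (n k : nat) : {mpoly K[n]} :=
  match @insub nat (fun m => m < n)%N _ k.-1 with
  | Some i => 'X_i
  | None => 0
  end.

Definition in_ideal (R : comNzRingType) (s : seq R) (p : R) : Prop :=
  exists c : 'I_(size s) -> R, p = \sum_(i < size s) c i * s`_i.

Definition In_gens (K : fieldType) (n : nat) : seq {mpoly K[n]} :=
  [seq xv K n 1 * xv K n j | j <- iota 3 (n - 3)]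
  ++ [seq xv K n 2 * xv K n j | j <- iota 4 (n - 3)]
  ++ [seq xv K n 3 * xv K n j | j <- iota 5 (n - 4)]
  ++ [seq xv K n i * xv K n n | i <- iota 4 (n - 5)].

Definition x4n_gens (K : fieldType) (n : nat) : seq {mpoly K[n]} :=
  [seq xv K n j | j <- iota 4 (n - 3)].

Definition Bentry (K : fieldType) (n i j : nat) : {mpoly K[n]} :=
  if j == (n - 3)%N then
    (if i == (n - 3)%N then xv K n 3
     else if i == 1%N then xv K n 2
     else xv K n (2 + i))
  else
    (if i == j then xv K n 1
     else if i == j.+1 then xv K n 2
     else if (i.+1 == j) && (2 <= j)%N then xv K n 3 * xv K n (3 + j)
     else 0).

Definition Bmat (K : fieldType) (n : nat) : 'M[{mpoly K[n]}]_(n - 3) :=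
  \matrix_(i < n - 3, j < n - 3) Bentry K n i.+1 j.+1.

Definition Dpoly (K : fieldType) (n : nat) : {mpoly K[n]} :=
  \det (Bmat K n) - (-1) ^+ n * xv K n 2 ^+ (n - 3).

From HB Require Import structures.
From mathcomp Require Import all_boot all_order all_algebra.
From mathcomp Require Import mpoly.
From mathcomp Require Import zify ring.
Import GRing.Theory.
Local Open Scope ring_scope.
Set Implicit Arguments. Unset Strict Implicit.

(* Let P_k be the leading k x k principal minor of B, and A_k the minor of B on
   rows 1..k+1 and columns 1..k, n-3. Away from its last column B is
   tridiagonal, so the P_k are continuants,
     P_(k+2) = x1 P_(k+1) - x2 x3 x_(k+5) P_k,
   and expanding A_(k+1) along its last row gives
     A_(k+1) = b_(k+2,n-3) P_(k+1) - x2 A_k.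
   Hence P_k = x1^k modulo x2 (x4,...,xn), and A_k = (-1)^k x2^(k+1) modulo
   (x4,...,xn). As det B = A_(n-4) = x3 P_(n-4) - x2 A_(n-5), this gives
   D = x3 P_(n-4) - x2 G with G in (x4,...,xn), whence (b); and (a) follows from
   x3 P_(n-4) = x1 x3 P_(n-5) - x2 x_(n-1) x3^2 P_(n-6). *)

Section IdealMembership.
Variable R : comNzRingType.
Implicit Types (s t : seq R) (a p q : R).

Lemma in_ideal0 s : in_ideal s 0.
Proof. by exists (fun=> 0); rewrite big1 // => i _; rewrite mul0r. Qed.

Lemma in_idealD s p q : in_ideal s p -> in_ideal s q -> in_ideal s (p + q).
Proof.
move=> [c ->] [d ->]; exists (fun i => c i + d i).
by rewrite -big_split; apply: eq_bigr => i _; rewrite mulrDl.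
Qed.

Lemma in_idealMl s a p : in_ideal s p -> in_ideal s (a * p).
Proof.
move=> [c ->]; exists (fun i => a * c i).
by rewrite mulr_sumr; apply: eq_bigr => i _; rewrite mulrA.
Qed.

Lemma in_idealMr s a p : in_ideal s p -> in_ideal s (p * a).
Proof. by rewrite mulrC; apply: in_idealMl. Qed.

Lemma in_idealB s p q : in_ideal s p -> in_ideal s q -> in_ideal s (p - q).
Proof. by move=> sp sq; rewrite -mulN1r; apply: in_idealD => //; apply: in_idealMl. Qed.

Lemma mem_in_ideal s q : q \in s -> in_ideal s q.
Proof.
move=> sq; pose i0 : 'I_(size s) := Ordinal (etrans (index_mem q s) sq).
exists (fun i => (i == i0)%:R).
rewrite (bigD1 i0) //= eqxx mul1r nth_index // big1 ?addr0 // => i /negbTE->.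
by rewrite mul0r.
Qed.

Lemma in_ideal_mul_gens s t a p : in_ideal s p ->
  (forall q, q \in s -> in_ideal t (a * q)) -> in_ideal t (a * p).
Proof.
move=> [c ->] sub_st; rewrite mulr_sumr.
apply: (big_ind (in_ideal t)); [exact: in_ideal0 | exact: in_idealD |].
by move=> i _; rewrite mulrCA; apply/in_idealMl/sub_st/mem_nth.
Qed.

End IdealMembership.

Lemma bump_lt k a : (a < k)%N -> bump k a = a.
Proof. by move=> lt_ak; rewrite /bump leqNgt lt_ak. Qed.

Section NatIndexedDeterminant.
Variable R : comNzRingType.
Implicit Type h : nat -> nat -> R.

Definition det_nat k h := \det (\matrix_(i < k, j < k) h i j).

Lemma eq_det_nat k h h' :
  (forall a b, (a < k)%N -> (b < k)%N -> h a b = h' a b) ->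
  det_nat k h = det_nat k h'.
Proof. by move=> eh; congr (\det _); apply/matrixP => a b; rewrite !mxE eh. Qed.

Lemma det_nat0 h : det_nat 0 h = 1.
Proof. exact: det_mx00. Qed.

Lemma det_nat_tr k h : det_nat k (fun a b => h b a) = det_nat k h.
Proof. by rewrite /det_nat -det_tr; congr (\det _); apply/matrixP => a b; rewrite !mxE. Qed.

Lemma sign_double k : (-1) ^+ (k + k) = 1 :> R.
Proof. by rewrite -signr_odd addnn odd_double. Qed.

Lemma det_nat_expand_last_row k h : det_nat k.+1 h =
  \sum_(j < k.+1) h k j * ((-1) ^+ (k + j) * det_nat k (fun a b => h a (bump j b))).
Proof.
rewrite /det_nat (expand_det_row _ ord_max); apply: eq_bigr => j _.
rewrite mxE /cofactor; congr (_ * (_ * \det _)).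
by apply/matrixP => a b; rewrite !mxE /= bump_lt.
Qed.

Lemma det_nat_last_row1 k h : (forall j, (j < k)%N -> h k j = 0) ->
  det_nat k.+1 h = h k k * det_nat k h.
Proof.
move=> row0; rewrite det_nat_expand_last_row big_ord_recr /= big1 => [|j _]; last first.
  by rewrite row0 ?mul0r.
rewrite add0r sign_double mul1r; congr (_ * _).
by apply: eq_det_nat => a b _ /bump_lt ->.
Qed.

Lemma det_nat_last_row2 k h : (forall j, (j < k)%N -> h k.+1 j = 0) ->
  det_nat k.+2 h = h k.+1 k.+1 * det_nat k.+1 h
                   - h k.+1 k * det_nat k.+1 (fun a b => h a (bump k b)).
Proof.
move=> row0; rewrite det_nat_expand_last_row !big_ord_recr /= big1 => [|j _]; last first.
  by rewrite row0 ?mul0r.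
rewrite add0r sign_double addSn exprS sign_double mulr1 mul1r mulN1r mulrN addrC.
congr (_ * _ - _).
by apply: eq_det_nat => a b _ /bump_lt ->.
Qed.

Lemma det_nat_continuant k h :
    (forall j, (j < k)%N -> h k.+1 j = 0) -> (forall i, (i < k)%N -> h i k.+1 = 0) ->
  det_nat k.+2 h = h k.+1 k.+1 * det_nat k.+1 h - h k k.+1 * h k.+1 k * det_nat k h.
Proof.
move=> row0 col0; have bump_kk : bump k k = k.+1 by rewrite /bump leqnn.
have minor : det_nat k.+1 (fun a b => h (bump k b) a) = h k.+1 k * det_nat k h.
  rewrite (det_nat_tr _ (fun a b => h (bump k a) b)) det_nat_last_row1 => [|j lt_jk].
    by rewrite bump_kk; congr (_ * _); apply: eq_det_nat => a b /bump_lt ->.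
  by rewrite bump_kk row0.
by rewrite -det_nat_tr det_nat_last_row2 // det_nat_tr minor mulrA.
Qed.

End NatIndexedDeterminant.

Section MatrixB.
Variables (K : fieldType) (p : nat).
Local Notation n := p.+3.+3.
Local Notation x := (xv K n).
Local Notation I := (In_gens K n).
Local Notation J := (x4n_gens K n).

Definition Bnat a b := Bentry K n a.+1 b.+1.

Lemma n_sub3 : (n - 3 = p.+3)%N. Proof. by []. Qed.

Lemma Bnat_last a :
  Bnat a p.+2 = if a == p.+2 then x 3 else if a == 0%N then x 2 else x (2 + a.+1).
Proof. by rewrite /Bnat /Bentry n_sub3 eqxx. Qed.

Ltac Bnat_cases :=
  rewrite /Bnat /Bentry n_sub3; repeat case: ifP; move=> *; by [|lia].

Lemma Bnat_diag b : (b < p.+2)%N -> Bnat b b = x 1.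
Proof. by Bnat_cases. Qed.

Lemma Bnat_subdiag b : (b < p.+2)%N -> Bnat b.+1 b = x 2.
Proof. by Bnat_cases. Qed.

Lemma Bnat_superdiag a : (a.+1 < p.+2)%N -> Bnat a a.+1 = x 3 * x (3 + a.+2).
Proof. by Bnat_cases. Qed.

Lemma Bnat_zero a b : (b < p.+2)%N ->
  a <> b -> a <> b.+1 -> a.+1 <> b -> Bnat a b = 0.
Proof. by Bnat_cases. Qed.

Definition lead_minor k := det_nat k Bnat.

Definition last_col_minor k :=
  det_nat k.+1 (fun a b => Bnat a (if b == k then p.+2 else b)).

Lemma lead_minor1 : lead_minor 1 = x 1.
Proof. by rewrite /lead_minor det_nat_last_row1 // det_nat0 mulr1 Bnat_diag. Qed.

Lemma lead_minorSS k : (k.+2 <= p.+2)%N ->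
  lead_minor k.+2 = x 1 * lead_minor k.+1 - x 3 * x (3 + k.+2) * x 2 * lead_minor k.
Proof.
move=> lt_k; rewrite /lead_minor det_nat_continuant => [|j lt_j|i lt_i].
- by rewrite Bnat_diag // Bnat_superdiag // Bnat_subdiag //; lia.
- by apply: Bnat_zero; lia.
- by apply: Bnat_zero; lia.
Qed.

Lemma last_col_minor0 : last_col_minor 0 = x 2.
Proof. by rewrite /last_col_minor det_nat_last_row1 // det_nat0 mulr1 Bnat_last. Qed.

Lemma last_col_minorS k : (k.+1 <= p.+2)%N ->
  last_col_minor k.+1 = Bnat k.+1 p.+2 * lead_minor k.+1 - x 2 * last_col_minor k.
Proof.
move=> lt_k; rewrite /last_col_minor det_nat_last_row2 => [|j lt_j]; last first.
  by rewrite ifN; [apply: Bnat_zero | apply/eqP]; lia.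
rewrite eqxx (ltn_eqF (ltnSn k)) (Bnat_subdiag lt_k).
have -> : det_nat k.+1 (fun a b => Bnat a (if b == k.+1 then p.+2 else b)) = lead_minor k.+1.
  by apply: eq_det_nat => a b _ lt_b; rewrite ifN //; apply/eqP; lia.
have -> // : det_nat k.+1 (fun a b => Bnat a (if bump k b == k.+1 then p.+2 else bump k b))
             = last_col_minor k.
apply: eq_det_nat => a b _ lt_b; rewrite /bump.
case: (ltngtP k b) => [lt_kb|lt_bk|<-]; first by lia.
  by rewrite /= ifN //; apply/eqP; lia.
by rewrite /= eqxx.
Qed.

Lemma det_Bmat : \det (Bmat K n) = x 3 * lead_minor p.+2 - x 2 * last_col_minor p.+1.
Proof.
have -> : \det (Bmat K n) = last_col_minor p.+2.
  rewrite [LHS]/(det_nat p.+3 Bnat).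
  by apply: eq_det_nat => a b _ _; case: eqP => [->|].
by rewrite last_col_minorS // Bnat_last eqxx.
Qed.

Lemma x1x3_in_I : in_ideal I (x 1 * x 3).
Proof. by apply/mem_in_ideal; rewrite mem_cat; apply/orP; left; apply/mapP; exists 3%N. Qed.

Lemma x2xj_in_I j : (4 <= j <= n)%N -> in_ideal I (x 2 * x j).
Proof.
move=> j_range; apply/mem_in_ideal; rewrite !mem_cat; apply/orP; right.
by apply/orP; left; apply/mapP; exists j; rewrite // mem_iota; lia.
Qed.

Lemma xj_in_J j : (4 <= j <= n)%N -> in_ideal J (x j).
Proof. by move=> j_range; apply/mem_in_ideal/mapP; exists j; rewrite // mem_iota; lia. Qed.

Lemma x2_mul_in_I f : in_ideal J f -> in_ideal I (x 2 * f).
Proof.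
move=> Jf; apply: in_ideal_mul_gens Jf _ => _ /mapP [j + ->].
by rewrite mem_iota => j_range; apply: x2xj_in_I; lia.
Qed.

Lemma lead_minor_mod k : (k.+1 <= p.+2)%N ->
  exists2 H, in_ideal J H & lead_minor k.+1 = x 1 ^+ k.+1 + x 2 * H.
Proof.
elim: k => [|k IHk] lt_k.
  by exists 0; [exact: in_ideal0 | rewrite lead_minor1 mulr0 addr0 expr1].
have [H JH lead_minor_k] := IHk (ltnW lt_k).
exists (x 1 * H - x 3 * x (3 + k.+2) * lead_minor k).
  apply: in_idealB; first exact: in_idealMl.
  by apply/in_idealMr/in_idealMl/xj_in_J; lia.
by rewrite lead_minorSS // lead_minor_k [x 1 ^+ k.+2]exprS; ring.
Qed.

Lemma last_col_minor_mod k : (k <= p.+1)%N ->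
  exists2 G, in_ideal J G & last_col_minor k = (-1) ^+ k * x 2 ^+ k.+1 + G.
Proof.
elim: k => [|k IHk] lt_k.
  by exists 0; [exact: in_ideal0 | rewrite last_col_minor0 addr0 mul1r expr1].
have [G JG last_col_minor_k] := IHk (ltnW lt_k).
exists (x (2 + k.+2) * lead_minor k.+1 - x 2 * G).
  by apply: in_idealB; [apply/in_idealMr/xj_in_J; lia | exact: in_idealMl].
rewrite (last_col_minorS (leqW lt_k)) Bnat_last !ifN //; try by apply/eqP; lia.
by rewrite last_col_minor_k !exprS; ring.
Qed.

Lemma x3_lead_minor_in_I : in_ideal I (x 3 * lead_minor p.+2).
Proof.
rewrite lead_minorSS // mulrBr mulrA [x 3 * x 1]mulrC.
apply: in_idealB; first exact/in_idealMr/x1x3_in_I.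
have -> : x 3 * (x 3 * x (3 + p.+2) * x 2 * lead_minor p) =
          x 2 * x (3 + p.+2) * (x 3 * x 3 * lead_minor p) by ring.
by apply/in_idealMr/x2xj_in_I; lia.
Qed.

Lemma Dpoly_decomp :
  exists2 G, in_ideal J G & Dpoly K n = x 3 * lead_minor p.+2 - x 2 * G.
Proof.
have [G JG last_col_minor_p] := last_col_minor_mod (leqnn p.+1).
exists G => //.
by rewrite /Dpoly det_Bmat last_col_minor_p n_sub3 !exprS; ring.
Qed.

End MatrixB.

Theorem lemma2p1 (K : fieldType) (n : nat) (hn : (6 <= n)%N) :
  in_ideal (In_gens K n) (Dpoly K n) /\
  exists f : {mpoly K[n]}, in_ideal (x4n_gens K n) f /\
    Dpoly K n - xv K n 1 ^+ (n - 4) * xv K n 3 = xv K n 2 * f.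
Proof.
have [p ->] : exists p, n = p.+3.+3 by exists (n - 6)%N; lia.
have [G JG ->] := Dpoly_decomp K p.
split; first by apply: in_idealB; [exact: x3_lead_minor_in_I | exact: x2_mul_in_I].
have [H JH ->] := lead_minor_mod K (leqnn p.+2).
exists (xv K p.+3.+3 3 * H - G); split; first by apply: in_idealB => //; apply: in_idealMl.
by rewrite (_ : p.+3.+3 - 4 = p.+2)%N //; ring.
Qed.
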